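(* For a bipartite quantum channel $\mathcal N_{AB\to A'B'}$, $$\gamma_{\mathrm{PPT}}(\mathcal N_{AB\to A'B'})\ge 2^{LN_{\max}(\mathcal N_{AB\to A'B'})}-1.$$
   Context: All Hilbert spaces finite-dimensional; $\log$ base 2. Alice holds $A$, $A'$; Bob holds $B$, $B'$. The unnormalized Choi operator of $\mathcal M_{AB\to A'B'}$ is $J^{\mathcal M}_{ABA'B'}=\sum_{i,j}|i\rangle\langle j|_{AB}\otimes\mathcal M(|i\rangle\langle j|_{AB})$. A bipartite channel is PPT if $(J^{\mathcal M}_{ABA'B'})^{T_{BB'}}\ge0$. $\gamma_{\mathrm{PPT}}(\mathcal N)=\inf\{c_1+c_2:\mathcal N=c_1\mathcal M_1-c_2\mathcal M_2,\ c_i\ge0,\ \mathcal M_i\text{ PPT channels}\}$. The max-logarithmic negativity is $LN_{\max}(\mathcal N)=\log\inf\{\max\{\|P_{AB}\|_\infty,\|P_{AB}^{T_B}\|_\infty\}:\ -P_{ABA'B'}^{T_{BB'}}\le(J^{\mathcal N}_{ABA'B'})^{T_{BB'}}\le P_{ABA'B'}^{T_{BB'}},\ P_{ABA'B'}\ge0\}$ with $P_{AB}=\mathrm{tr}_{A'B'}P_{ABA'B'}$. *)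

From HB Require Import structures.
From mathcomp Require Import all_boot all_order all_algebra.
From mathcomp Require Import complex.
From mathcomp Require Import all_classical all_reals ereal exp.
Set Implicit Arguments. Unset Strict Implicit. Unset Printing Implicit Defensive.
Import Order.TTheory GRing.Theory Num.Theory.
Local Open Scope ring_scope.
Local Open Scope complex_scope.

Section QDefs.
Variable R : realType.
Local Notation C := R[i].

(* A linear operator on the finite-dimensional Hilbert space C^T, T a finite
   index set (computational basis), as its matrix of entries. *)
Definition op (T : finType) := T -> T -> C.

Definition opadd T (X Y : op T) : op T := fun i j => X i j + Y i j.
Definition opopp T (X : op T) : op T := fun i j => - X i j.
Definition opscale T (c : C) (X : op T) : op T := fun i j => c * X i j.
Definition opapply T (X : op T) (v : T -> C) : T -> C :=
  fun i => \sum_j X i j * v j.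

(* Positive semidefiniteness: <v, X v> >= 0 for every vector v
   (in C, "0 <= z" means z is real and nonnegative). *)
Definition psd T (X : op T) : Prop :=
  forall v : T -> C, 0 <= \sum_i \sum_j (v i)^* * X i j * v j.

Definition loewner T (X Y : op T) : Prop := psd (opadd Y (opopp X)).

Definition trace T (X : op T) : C := \sum_i X i i.

Definition vnormsq (T : finType) (v : T -> C) : C := \sum_i `|v i| ^+ 2.

Definition opnorm T (X : op T) : R :=
  inf [set c : R | (0 <= c)%R /\
        forall v : T -> C, vnormsq (opapply X v) <= (c%:C) ^+ 2 * vnormsq v].

Definition opmap (I O : finType) := op I -> op O.

Definition linear_map I O (M : opmap I O) : Prop :=
  forall (c : C) (X Y : op I), M (opadd (opscale c X) Y) = opadd (opscale c (M X)) (M Y).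

Definition ampl (n : nat) I O (M : opmap I O) (X : op ('I_n * I)%type) : op ('I_n * O)%type :=
  fun ro sp => M (fun i j => X (ro.1, i) (sp.1, j)) ro.2 sp.2.

Definition completely_positive I O (M : opmap I O) : Prop :=
  forall (n : nat) (X : op ('I_n * I)%type), psd X -> psd (ampl M X).

Definition trace_preserving I O (M : opmap I O) : Prop :=
  forall X : op I, trace (M X) = trace X.

Definition channel I O (M : opmap I O) : Prop :=
  [/\ linear_map M, completely_positive M & trace_preserving M].

Definition eunit (T : finType) (i j : T) : op T :=
  fun k l => ((k == i) && (l == j))%:R.

(* Unnormalized Choi operator J_{AB A'B'} = sum_{ij} |i><j| (x) M(|i><j|) *)
Definition choi I O (M : opmap I O) : op (I * O)%type :=
  fun x y => M (eunit x.1 y.1) x.2 y.2.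

Variables (A B A' B' : finType).
Local Notation AB := (A * B)%type.
Local Notation A'B' := (A' * B')%type.

Definition ptB (X : op AB) : op AB :=
  fun x y => X (x.1, y.2) (y.1, x.2).

Definition ptBB' (X : op (AB * A'B')%type) : op (AB * A'B')%type :=
  fun x y => X ((x.1.1, y.1.2), (x.2.1, y.2.2)) ((y.1.1, x.1.2), (y.2.1, x.2.2)).

Definition ptrace2 (X : op (AB * A'B')%type) : op AB :=
  fun i j => \sum_o X (i, o) (j, o).

Definition ppt_channel (M : opmap AB A'B') : Prop :=
  channel M /\ psd (ptBB' (choi M)).

Local Open Scope ereal_scope.

Definition gamma_PPT (N : opmap AB A'B') : \bar R :=
  ereal_inf [set x : \bar R | exists c1 c2 : R,
     [/\ (0 <= c1)%R, (0 <= c2)%R,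
        exists M1 M2 : opmap AB A'B', [/\ ppt_channel M1, ppt_channel M2 &
          forall X, N X = opadd (opscale (c1%:C) (M1 X)) (opopp (opscale (c2%:C) (M2 X)))]
      & x = ((c1 + c2)%R)%:E]].

(* the quantity 2^{LN_max(N)}: infimum of max{||P_AB||, ||P_AB^{T_B}||} *)
Definition LNmax_set (N : opmap AB A'B') : set R :=
  [set t : R | exists P : op (AB * A'B')%type,
      [/\ psd P,
          loewner (opopp (ptBB' P)) (ptBB' (choi N)),
          loewner (ptBB' (choi N)) (ptBB' P) &
          t = Num.max (opnorm (ptrace2 P)) (opnorm (ptB (ptrace2 P)))]].

Definition log2 (x : R) : R := (ln x / ln 2)%R.

Definition LNmax (N : opmap AB A'B') : \bar R :=
  match ereal_inf [set t%:E | t in LNmax_set N] with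
  | r%:E => (log2 r)%:E
  | +oo => +oo
  | -oo => -oo
  end.

End QDefs.

Local Open Scope ereal_scope.
Definition exp2e (R : realType) (x : \bar R) : \bar R :=
  match x with
  | r%:E => (2 `^ r)%R%:E
  | +oo => +oo
  | -oo => 0
  end.

(** Given a decomposition N = c1 M1 - c2 M2 into PPT channels, the operator
    P := c1 J^{M1} + c2 J^{M2} is feasible for LN_max: it is positive by
    complete positivity; P^{T_BB'} + (J^N)^{T_BB'} = 2 c1 (J^{M1})^{T_BB'} and
    P^{T_BB'} - (J^N)^{T_BB'} = 2 c2 (J^{M2})^{T_BB'} are positive by the PPT
    property; and trace preservation gives P_AB = (c1 + c2) 1, which is its
    own partial transpose and has norm c1 + c2.  Hence 2^{LN_max(N)} <= c1 + c2
    for every decomposition. *)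

From HB Require Import structures.
From mathcomp Require Import all_boot all_order all_algebra.
From mathcomp Require Import complex.
From mathcomp Require Import all_classical all_reals ereal exp.
From mathcomp Require Import ring lra.
Set Implicit Arguments. Unset Strict Implicit. Unset Printing Implicit Defensive.
Import Order.TTheory GRing.Theory Num.Theory.
Local Open Scope ring_scope.
Local Open Scope complex_scope.

Section Operators.
Variables (R : realType) (T : finType).
Local Notation C := R[i].

Definition opscalar (k : C) : op R T := fun i j => k * (i == j)%:R.

Lemma eq_psd (X Y : op R T) : (forall i j, X i j = Y i j) -> psd X -> psd Y.
Proof.
by move=> XY; have -> : Y = X by apply/funext=> i; apply/funext=> j; rewrite XY.
Qed.

Lemma psd_scale (c : C) (X : op R T) : 0 <= c -> psd X -> psd (opscale c X).
Proof.
move=> c_ge0 psdX v.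
have -> : \sum_i \sum_j (v i)^* * opscale c X i j * v j
    = c * \sum_i \sum_j (v i)^* * X i j * v j.
  rewrite mulr_sumr; apply: eq_bigr => i _.
  by rewrite mulr_sumr; apply: eq_bigr => j _; rewrite /opscale; ring.
exact: mulr_ge0.
Qed.

Lemma psd_add (X Y : op R T) : psd X -> psd Y -> psd (opadd X Y).
Proof.
move=> psdX psdY v.
have -> : \sum_i \sum_j (v i)^* * opadd X Y i j * v j
    = \sum_i \sum_j (v i)^* * X i j * v j + \sum_i \sum_j (v i)^* * Y i j * v j.
  rewrite -big_split; apply: eq_bigr => i _.
  by rewrite -big_split; apply: eq_bigr => j _; rewrite /opadd /=; ring.
exact: addr_ge0.
Qed.

Lemma psd_outer (f : T -> C) : psd (fun i j => f i * (f j)^*).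
Proof.
move=> v.
have -> : \sum_i \sum_j (v i)^* * (f i * (f j)^*) * v j
    = (\sum_j (f j)^* * v j)^* * (\sum_j (f j)^* * v j).
  rewrite (rmorph_sum conjc) big_distrl; apply: eq_bigr => i _.
  rewrite big_distrr; apply: eq_bigr => j _.
  by rewrite (rmorphM conjc) /= conjcK; ring.
by rewrite mulrC -sqr_normc exprn_ge0.
Qed.

Lemma opnorm_scalar (k : R) : (0 <= k)%R -> (opnorm (opscalar k%:C) <= k)%R.
Proof.
move=> k_ge0; apply: ge_inf; first by exists 0%R => c [].
split=> // v.
suff -> : vnormsq (opapply (opscalar k%:C) v) = k%:C ^+ 2 * vnormsq v by [].
rewrite /vnormsq mulr_sumr; apply: eq_bigr => i _.
have -> : opapply (opscalar k%:C) v i = k%:C * v i.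
  rewrite /opapply (bigD1 i) //= /opscalar eqxx mulr1 big1 ?addr0 // => j /negbTE ji.
  by rewrite eq_sym ji mulr0 mul0r.
by rewrite normrM exprMn ger0_norm // lecR.
Qed.

End Operators.

Section Choi.
Variables (R : realType) (I O : finType).

(* J^M is the amplification of M applied to the projector onto the
   unnormalised maximally entangled vector sum_i |i>|i>, once 'I_#|I| is
   identified with I. *)
Lemma choi_psd (M : opmap R I O) : completely_positive M -> psd (choi M).
Proof.
move=> cpM v.
pose omega (x : 'I_#|I| * I) : R[i] := (x.1 == enum_rank x.2)%:R.
pose h (x : 'I_#|I| * O) : I * O := (enum_val x.1, x.2).
have h_bij : bijective h.
  by exists (fun x => (enum_rank x.1, x.2)) => [[a o]|[i o]];
    rewrite /h /= ?enum_valK ?enum_rankK.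
have choi_ampl x y :
    choi M (h x) (h y) = ampl M (fun x y => omega x * (omega y)^*) x y.
  case: x y => [a o] [b p]; rewrite /choi /ampl /h /=.
  congr (M _ o p); apply/funext=> i; apply/funext=> j.
  rewrite /eunit /omega /= conjC_nat -natrM mulnb.
  by congr ((_ && _)%:R); apply/eqP/eqP => [->|->]; rewrite ?enum_valK ?enum_rankK.
have := cpM _ _ (psd_outer omega) (v \o h).
rewrite (reindex h (onW_bij _ h_bij)).
under eq_bigr do rewrite (reindex h (onW_bij _ h_bij)).
by under eq_bigr => x _ do under eq_bigr => y _ do rewrite choi_ampl.
Qed.

End Choi.

(* The bound is max t 1 rather than t because [log2] sends nonpositive
   arguments to [0] ([ln] is [0] there). *)
Lemma powR2_log2_le (R : realType) (r : R) : (2 `^ log2 r <= Num.max r 1)%R.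
Proof.
rewrite le_max; have [r_gt0|r_le0] := ltP 0%R r.
  have ln2_neq0 : ln (2 : R) != 0 by rewrite gt_eqF // ln_gt0 // ltr1n.
  by rewrite /powR /log2 ifF ?pnatr_eq0 // divfK // lnK ?lexx // posrE.
by rewrite /log2 ln0 // mul0r powRr0 lexx orbT.
Qed.

Section Bipartite.
Variables (R : realType) (A B A' B' : finType).
Local Notation AB := (A * B)%type.
Local Notation A'B' := (A' * B')%type.

Lemma ptB_opscalar (k : R[i]) : ptB (opscalar k : op R AB) = opscalar k.
Proof.
apply/funext=> -[a b]; apply/funext=> -[a' b'].
by rewrite /ptB /opscalar /= !xpair_eqE (eq_sym b').
Qed.

Lemma ptrace2_choi (M : opmap R AB A'B') :
  trace_preserving M -> ptrace2 (choi M) = opscalar 1.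
Proof.
move=> tpM; apply/funext=> i; apply/funext=> j.
have := tpM (eunit R i j); rewrite /ptrace2 /choi /trace /= => ->.
rewrite /eunit /opscalar mul1r (bigD1 i) //= eqxx /= big1 ?addr0 // => k.
by move=> /negbTE ->.
Qed.

Lemma LNmax_set_ppt_decomposition (N M1 M2 : opmap R AB A'B') (c1 c2 : R) :
    (0 <= c1)%R -> (0 <= c2)%R -> ppt_channel M1 -> ppt_channel M2 ->
    (forall X, N X = opadd (opscale c1%:C (M1 X)) (opopp (opscale c2%:C (M2 X)))) ->
  exists2 t, LNmax_set N t & (t <= c1 + c2)%R.
Proof.
move=> c1_ge0 c2_ge0 [[_ cp1 tp1] ppt1] [[_ cp2 tp2] ppt2] N_eq.
have c1C_ge0 : 0 <= c1%:C by rewrite lecR.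
have c2C_ge0 : 0 <= c2%:C by rewrite lecR.
pose P := opadd (opscale c1%:C (choi M1)) (opscale c2%:C (choi M2)).
have choiN x y : choi N x y = c1%:C * choi M1 x y - c2%:C * choi M2 x y.
  by rewrite /choi N_eq.
have trP : ptrace2 P = opscalar (c1 + c2)%:C.
  apply/funext=> i; apply/funext=> j.
  have -> : ptrace2 P i j
      = c1%:C * ptrace2 (choi M1) i j + c2%:C * ptrace2 (choi M2) i j.
    by rewrite /ptrace2 !mulr_sumr -big_split.
  by rewrite (ptrace2_choi tp1) (ptrace2_choi tp2) /opscalar rmorphD; ring.
exists (Num.max (opnorm (ptrace2 P)) (opnorm (ptB (ptrace2 P)))).
  exists P; split=> //.
  - by apply: psd_add; apply: psd_scale => //; apply: choi_psd.
  - apply: (@eq_psd _ _ (opscale (c1%:C * 2) (ptBB' (choi M1)))).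
      by move=> x y; rewrite /ptBB' /P /opadd /opopp /opscale /= choiN; ring.
    by apply: psd_scale => //; rewrite mulr_ge0.
  - apply: (@eq_psd _ _ (opscale (c2%:C * 2) (ptBB' (choi M2)))).
      by move=> x y; rewrite /ptBB' /P /opadd /opopp /opscale /= choiN; ring.
    by apply: psd_scale => //; rewrite mulr_ge0.
by rewrite ge_max trP ptB_opscalar opnorm_scalar ?addr_ge0.
Qed.

Lemma exp2e_LNmax_le (N : opmap R AB A'B') (t : R) :
  LNmax_set N t -> (exp2e (LNmax N) <= (Num.max t 1)%:E)%E.
Proof.
move=> Nt; have /ereal_inf_lbound : [set x%:E | x in LNmax_set N]%classic t%:E by exists t.
rewrite /LNmax; case: ereal_inf => [r| |] /=.
- rewrite !lee_fin => r_le_t; apply: le_trans (powR2_log2_le r) _.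
  by rewrite ge_max !le_max r_le_t lexx orbT.
- by rewrite leye_eq.
- by rewrite lee_fin le_max ler01 orbT.
Qed.

End Bipartite.

Local Open Scope ereal_scope.

Theorem lemma1 (R : realType) (A B A' B' : finType)
    (N : opmap R (A * B)%type (A' * B')%type) :
  channel N ->
  gamma_PPT N >= exp2e (LNmax N) - 1%:E.
Proof.
move=> _; apply/ereal_infP => _ [c1 [c2 [c1_ge0 c2_ge0 [M1 [M2 [ppt1 ppt2 N_eq]]] ->]]].
have [t Nt t_le] := LNmax_set_ppt_decomposition c1_ge0 c2_ge0 ppt1 ppt2 N_eq.
rewrite leeBlDr //; apply: le_trans (exp2e_LNmax_le Nt) _.
by rewrite -EFinD lee_fin ge_max; apply/andP; split; lra.
Qed.
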